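(* Let $n\ge1$ and let $\bar F:\mathbb{R}^n\to[0,\infty)$ be a Finsler norm. Write $\|\vec v\|=\bar F(\vec v)$ and $\bar g_{\vec v}(\vec v,\vec w)=\frac12\frac{\partial^2\bar F^2}{\partial v^\alpha\partial v^\beta}(\vec v)\,v^\alpha w^\beta$ for $\vec v\ne0$, with $\bar g_{\vec 0}(\vec 0,\vec w):=0$. Then for all $v^0,w^0>0$ and all $\vec v,\vec w\in\mathbb{R}^n$ with $(v^0)^2-\|\vec v\|^2>0$ and $(w^0)^2-\|\vec w\|^2>0$, $$\big[v^0w^0-\bar g_{\vec v}(\vec v,\vec w)\big]^2-\big[(v^0)^2-\|\vec v\|^2\big]\big[(w^0)^2-\|\vec w\|^2\big]\ge0.$$
   Context: A Finsler norm on $\mathbb{R}^n$ is a function $\bar F:\mathbb{R}^n\to[0,\infty)$ that is smooth on $\mathbb{R}^n\setminus\{0\}$, continuous at $0$, positively homogeneous of degree 1 ($\bar F(\lambda x)=\lambda\bar F(x)$ for $\lambda>0$), and such that for every $x\neq0$ the matrix $\frac12\frac{\partial^2\bar F^2}{\partial x^\alpha\partial x^\beta}(x)$ is positive definite. Greek indices run over $1,\dots,n$, with summation over repeated indices. *)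

From HB Require Import structures.
From mathcomp Require Import all_boot all_order all_algebra.
From mathcomp Require Import all_classical all_reals all_analysis.
Set Implicit Arguments. Unset Strict Implicit. Unset Printing Implicit Defensive.
Import Order.TTheory GRing.Theory Num.Theory numFieldNormedType.Exports.
Local Open Scope classical_set_scope.
Local Open Scope ring_scope.

Section Finsler.
Variables (R : realType) (n : nat).

Definition ebasis (a : 'I_n) : 'rV[R]_n := delta_mx 0 a.

Definition partial (a : 'I_n) (f : 'rV[R]_n -> R) : 'rV[R]_n -> R :=
  fun x => derive f x (ebasis a).

Definition iter_partial (l : seq 'I_n) (f : 'rV[R]_n -> R) : 'rV[R]_n -> R :=
  foldr partial f l.

Definition smooth_on (U : set 'rV[R]_n) (f : 'rV[R]_n -> R) : Prop :=
  open U /\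
  forall l : seq 'I_n,
    {in U, continuous (iter_partial l f)} /\
    (forall a x, U x -> derivable (iter_partial l f) x (ebasis a)).

Definition sqF (F : 'rV[R]_n -> R) : 'rV[R]_n -> R := fun x => F x ^+ 2.

Definition fund_tensor (F : 'rV[R]_n -> R) (x : 'rV[R]_n) (a b : 'I_n) : R :=
  2^-1 * partial b (partial a (sqF F)) x.

Definition finsler_norm (F : 'rV[R]_n -> R) : Prop :=
  (forall x, 0 <= F x) /\
  smooth_on [set x | x != 0] F /\
  {for 0, continuous F} /\
  (forall (l : R) x, 0 < l -> F (l *: x) = l * F x) /\
  (forall x, x != 0 -> forall y : 'rV[R]_n, y != 0 ->
     0 < \sum_(a < n) \sum_(b < n) fund_tensor F x a b * y 0 a * y 0 b).

Definition gbar (F : 'rV[R]_n -> R) (v w : 'rV[R]_n) : R :=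
  if v == 0 then 0
  else \sum_(a < n) \sum_(b < n) fund_tensor F v a b * v 0 a * w 0 b.

End Finsler.

From HB Require Import structures.
From mathcomp Require Import all_boot all_order all_algebra.
From mathcomp Require Import all_classical all_reals all_analysis.
From mathcomp Require Import ring lra.
Import Order.TTheory GRing.Theory Num.Theory numFieldNormedType.Exports.
Local Open Scope classical_set_scope.
Local Open Scope ring_scope.

(* The inequality is a reversed Cauchy-Schwarz inequality in the Minkowski
   plane, fed by the fundamental inequality of Finsler geometry
   gbar_v(v, w) <= F(v) F(w).

   Write G = F^2.  Away from 0 the partial derivatives of G and of its
   partials are continuous, so their directional derivatives are linear
   combinations of partials (derive_from_partials: telescope along the
   coordinate axes and apply the mean-value theorem).  Homogeneity then gives:
   - Euler's identity sum_a v_a d_a G(v) = 2 G(v), which differentiated along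
     e_b gives sum_a v_a d_b d_a G(v) = d_b G(v); hence gbar_v(v, w) is half
     the directional derivative 'D_w G(v);
   - along a segment avoiding 0, the second derivative of G is 2 g(d, d) >= 0,
     so G lies above its tangent: G(v) + 'D_d G(v) <= G(v + d).
   With d = l w - v (l > 0) and G(l w) = l^2 G(w) this reads
   l 'D_w G(v) <= l^2 F(w)^2 + F(v)^2 for all l > 0, so 'D_w G(v) <= 2 F(v) F(w);
   if the segment meets 0, w is a nonpositive multiple of v and the bound is
   immediate.  Finally, for a = F v < v0, b = F w < w0 and g <= a b,
   (v0 w0 - g)^2 - (v0^2 - a^2)(w0^2 - b^2) >= (v0 b - a w0)^2 >= 0. *)

Lemma scaleRE (R : realType) (u v : R) : u *: v = u * v.
Proof. by []. Qed.

Section DirectionalDerivatives.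
Context {R : realType} {n : nat}.

Lemma is_derive_line {f : 'rV[R]_n -> R} {y d : 'rV[R]_n} {s : R} :
  derivable f (y + s *: d) d ->
  is_derive s 1 (fun t : R => f (y + t *: d)) ('D_d f (y + s *: d)).
Proof.
have quotE : (fun h : R => h^-1 *: (((fun t => f (y + t *: d)) \o shift s) (h *: 1)
           - f (y + s *: d))) =
         (fun h : R => h^-1 *: ((f \o shift (y + s *: d)) (h *: d) - f (y + s *: d))).
  apply/funext => h /=; congr (_ *: (f _ - _)).
  by rewrite [h *: 1]mulr1 scalerDl addrCA.
move=> fd; split; first by rewrite /derivable quotE.
by rewrite /derive quotE.
Qed.

Lemma mvt_estimate (phi : R -> R) (a b c eps : R) : a <= b ->
  (forall s, a <= s <= b -> derivable phi s 1 /\ `|'D_1 phi s - c| <= eps) ->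
  `|phi b - phi a - (b - a) * c| <= eps * (b - a).
Proof.
move=> ab H.
pose psi := phi - id * cst c.
have psiE t : psi t = phi t - t * c by [].
have psi_der s : a <= s <= b -> is_derive s 1 psi ('D_1 phi s - c).
  move=> /H[/derivableP phi_der _]; apply: is_derive_eq.
  by rewrite scaler0 add0r [_ *: 1]mulr1.
have psi_cont : {within `[a, b], continuous psi}.
  apply: derivable_within_continuous => s; rewrite in_itv /= => hs.
  by case: (psi_der s hs).
have [xi + incrE] : exists2 xi, xi \in `[a, b] &
    psi b - psi a = ('D_1 phi xi - c) * (b - a).
  apply: MVT_segment ab _ psi_cont => s; rewrite in_itv /= => /andP[sa sb].
  by apply: psi_der; rewrite !ltW.
rewrite in_itv /= => /H[_ hxi].
have -> : phi b - phi a - (b - a) * c = psi b - psi a by rewrite !psiE; ring.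
by rewrite incrE normrM (ger0_norm (_ : 0 <= b - a)) ?subr_ge0 // ler_wpM2r ?subr_ge0.
Qed.

Lemma segment_estimate (f : 'rV[R]_n -> R) (y d : 'rV[R]_n) (h c eps : R) :
  (forall s, `|s| <= `|h| ->
     derivable f (y + s *: d) d /\ `|'D_d f (y + s *: d) - c| <= eps) ->
  `|f (y + h *: d) - f y - h * c| <= eps * `|h|.
Proof.
move=> H.
pose phi t := f (y + t *: d).
have Hphi s : `|s| <= `|h| -> derivable phi s 1 /\ `|'D_1 phi s - c| <= eps.
  move=> /H[fd fc]; have [phi_der ->] := is_derive_line fd.
  by split.
have phi0 : phi 0 = f y by rewrite /phi scale0r addr0.
rewrite -phi0 -/(phi h); have [h0|h0] := leP 0 h.
- have := @mvt_estimate phi 0 h c eps h0; rewrite !subr0 (ger0_norm h0); apply.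
  by move=> s /andP[s0 sh]; apply: Hphi; rewrite !ger0_norm // (le_trans s0 sh).
- have := @mvt_estimate phi h 0 c eps (ltW h0); rewrite !sub0r (ltr0_norm h0).
  have -> : phi 0 - phi h - - h * c = - (phi h - phi 0 - h * c) by ring.
  rewrite normrN; apply=> s /andP[hs s0].
  by apply: Hphi; rewrite (ler0_norm s0) (ltr0_norm h0) lerN2.
Qed.

Lemma is_derive_coord (z d : 'rV[R]_n) (a : 'I_n) :
  is_derive z d (fun y : 'rV[R]_n => y 0 a) (d 0 a).
Proof.
have quotE : \forall h \near 0^',
    h^-1 *: (((fun y : 'rV[R]_n => y 0 a) \o shift z) (h *: d) - z 0 a) = d 0 a.
  near=> h; have h0 : h != 0 by near: h; exact: nbhs_dnbhs_neq.
  by rewrite /= !mxE addrK scaleRE mulKf.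
split; first exact: is_cvg_near_cst quotE.
by rewrite /derive; apply: lim_near_cst.
Unshelve. all: by end_near.
Qed.

Lemma row_entry_le_norm (u : 'rV[R]_n) j : `|u 0 j| <= `|u|.
Proof.
rewrite [leRHS]/Num.Def.normr /= mx_normrE.
by apply/bigmax_geP; right => /=; exists (0, j).
Qed.

Lemma row_norm_le (u : 'rV[R]_n) c :
  0 <= c -> (forall j, `|u 0 j| <= c) -> `|u| <= c.
Proof.
move=> c0 H; rewrite /Num.Def.normr /= mx_normrE (bigmax_le _ c0) //= => -[i j] _.
by rewrite (ord1 i); exact: H.
Qed.

Lemma ebasisE (a j : 'I_n) : ebasis R a 0 j = (j == a)%:R.
Proof. by rewrite /ebasis mxE eqxx. Qed.

(* trunc_row u k keeps the first k coordinates of u; moving from x to x + u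
   through x + trunc_row u k, k = 0 .. n, changes one coordinate at a time. *)
Definition trunc_row (u : 'rV[R]_n) (k : nat) : 'rV[R]_n :=
  \row_(a < n) (if (a < k)%N then u 0 a else 0).

Lemma trunc_row0 u : trunc_row u 0 = 0.
Proof. by apply/rowP => a; rewrite !mxE. Qed.

Lemma trunc_row_full u : trunc_row u n = u.
Proof. by apply/rowP => a; rewrite !mxE ltn_ord. Qed.

Lemma trunc_rowS u (k : 'I_n) :
  trunc_row u k.+1 = trunc_row u k + u 0 k *: ebasis R k.
Proof.
apply/rowP => a; rewrite !mxE ltnS leq_eqVlt eqxx /=.
have [->|ak] := eqVneq a k; first by rewrite eqxx ltnn /= mulr1 add0r.
have ak' : (nat_of_ord a == k) = false by apply/negbTE.
by rewrite ak' /= mulr0 addr0.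
Qed.

Lemma trunc_row_step_norm (u : 'rV[R]_n) (k : 'I_n) (t s : R) :
  `|s| <= `|t * u 0 k| -> `|t *: trunc_row u k + s *: ebasis R k| <= `|t| * `|u|.
Proof.
move=> hs; apply: row_norm_le; first by rewrite mulr_ge0.
move=> j; rewrite !mxE eqxx /=.
have [->|jk] := eqVneq j k.
  rewrite ltnn mulr0 add0r mulr1; apply: (le_trans hs).
  by rewrite normrM ler_wpM2l // row_entry_le_norm.
rewrite mulr0 addr0; case: ifP => _; last by rewrite mulr0 normr0 mulr_ge0.
by rewrite normrM ler_wpM2l // row_entry_le_norm.
Qed.

Lemma partials_increment_estimate (f : 'rV[R]_n -> R) (x u : 'rV[R]_n) (t eps : R) :
  (forall z, `|z - x| <= `|t| * `|u| -> forall a,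
     derivable f z (ebasis R a) /\ `|partial a f z - partial a f x| <= eps) ->
  `|f (x + t *: u) - f x - t * \sum_(a < n) u 0 a * partial a f x|
    <= eps * (`|t| * \sum_(a < n) `|u 0 a|).
Proof.
move=> H.
pose g k := f (x + t *: trunc_row u k).
have telescope : f (x + t *: u) - f x = \sum_(k < n) (g k.+1 - g k).
  rewrite -(big_mkord xpredT (fun k => g k.+1 - g k)) telescope_sumr //.
  by rewrite /g trunc_row_full trunc_row0 scaler0 addr0.
rewrite telescope mulr_sumr -sumrB 2!mulr_sumr.
apply: le_trans (ler_norm_sum _ _ _) (ler_sum _ _) => k _.
rewrite /g trunc_rowS scalerDr addrA scalerA mulrA -normrM.
apply: segment_estimate => s hs.
have near_x : `|x + t *: trunc_row u k + s *: ebasis R k - x| <= `|t| * `|u|.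
  by rewrite [_ - x]addrC !addrA addNr add0r trunc_row_step_norm.
by have [fd fc] := H _ near_x k.
Qed.

Lemma derive_from_partials (f : 'rV[R]_n -> R) (x : 'rV[R]_n) :
  (\forall z \near x, forall a, derivable f z (ebasis R a)) ->
  (forall a, {for x, continuous (partial a f)}) ->
  forall u, derivable f x u /\ 'D_u f x = \sum_(a < n) u 0 a * partial a f x.
Proof.
move=> fd fc u; set D := \sum_(a < n) _.
suff quot_cvg : (fun h : R => h^-1 *: ((f \o shift x) (h *: u) - f x)) @ 0^' --> D.
  split; first by apply/cvg_ex; exists D.
  by rewrite /derive; apply: cvg_lim.
apply/cvgrPdist_le => e e0.
pose S := \sum_(a < n) `|u 0 a|.
have S0 : 0 <= S by apply: sumr_ge0 => a _.
pose eps := e / (S + 1).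
have eps0 : 0 < eps by rewrite divr_gt0 // ltr_wpDl.
have fc_near : \forall z \near x, forall a, `|partial a f x - partial a f z| <= eps.
  apply: (@filter_forall _ _ (fun a z => `|partial a f x - partial a f z| <= eps)
    (nbhs x) _) => a.
  exact: (cvgrPdist_le _ _).1 (fc a) eps eps0.
have [del del0 hball] := (nbhs_ballP _ _).1 ((near_andP _ _ _).2 (conj fd fc_near)).
near=> t.
have t0 : t != 0 by near: t; exact: nbhs_dnbhs_neq.
have tdel : `|t| * (`|u| + 1) < del.
  rewrite -ltr_pdivlMr ?ltr_wpDl //.
  by near: t; apply: dnbhs0_lt; rewrite divr_gt0 // ltr_wpDl.
have incr : `|f (x + t *: u) - f x - t * D| <= eps * (`|t| * S).
  apply: partials_increment_estimate => z hz a.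
  have [] := hball z.
    rewrite -ball_normE /ball_ /= distrC (le_lt_trans hz) //.
    by apply: le_lt_trans tdel; rewrite ler_wpM2l // lerDl.
  by move=> zd zc; split; [exact: zd | rewrite distrC; exact: zc].
have -> : D - t^-1 *: ((f \o shift x) (t *: u) - f x) =
    - t^-1 * (f (x + t *: u) - f x - t * D).
  by rewrite /= [t *: u + x]addrC scaleRE; field.
rewrite normrM normrN normfV ler_pdivrMl ?normr_gt0 //; apply: le_trans incr _.
rewrite mulrCA ler_wpM2l // /eps mulrAC ler_pdivrMr ?ltr_wpDl //.
by rewrite ler_wpM2l ?lerDl ?ltW.
Unshelve. all: by end_near.
Qed.

Lemma near_eq_continuous (f g : 'rV[R]_n -> R) x :
  (\forall z \near x, f z = g z) -> {for x, continuous f} -> {for x, continuous g}.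
Proof.
move=> fg cf; have fgx : f x = g x := nbhs_singleton fg.
suff : g z @[z --> x] --> f x by rewrite fgx.
exact: cvg_trans (near_eq_cvg fg) cf.
Qed.

End DirectionalDerivatives.

(* A quadratic l^2 b^2 - l D + a^2 that is nonnegative for all l > 0 has
   D <= 2 a b (minimize at l = D / (2 b^2)). *)
Lemma quadratic_bound (K : realFieldType) (a b D : K) : 0 <= a -> 0 <= b ->
  (forall l, 0 < l -> l * D <= l ^+ 2 * b ^+ 2 + a ^+ 2) -> D <= 2 * a * b.
Proof.
move=> a0 b0 H; have [D0|D0] := lerP D 0; first by nra.
have [b00|bpos] := eqVneq b 0.
  have l0 : 0 < (a ^+ 2 + 1) / D by rewrite divr_gt0 // ltr_wpDl ?sqr_ge0.
  have := H _ l0; rewrite b00 divfK ?gt_eqF //; lra.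
have b2 : 0 < b ^+ 2 by rewrite exprn_gt0 // lt_def bpos.
have l0 : 0 < D / (2 * b ^+ 2) by rewrite divr_gt0 // mulr_gt0.
have := H _ l0; set l := D / (2 * b ^+ 2) => hl.
have lE : l * (2 * b ^+ 2) = D by rewrite /l divfK // gt_eqF // mulr_gt0.
have lD : l * D <= 2 * a ^+ 2.
  have lb : l ^+ 2 * b ^+ 2 = l * D / 2 by rewrite -lE; field.
  lra.
have D2 : D ^+ 2 <= (2 * a * b) ^+ 2.
  have -> : D ^+ 2 = l * D * (2 * b ^+ 2) by rewrite expr2 -{1}lE; ring.
  have -> : (2 * a * b) ^+ 2 = 2 * a ^+ 2 * (2 * b ^+ 2) by ring.
  by rewrite ler_wpM2r // mulr_ge0 // ltW.
have ab0 : 0 <= 2 * a * b by rewrite !mulr_ge0.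
nra.
Qed.

Lemma reverse_cauchy_schwarz (K : realFieldType) (v0 w0 a b g : K) :
  0 < v0 -> 0 < w0 -> 0 <= a -> 0 <= b ->
  0 < v0 ^+ 2 - a ^+ 2 -> 0 < w0 ^+ 2 - b ^+ 2 -> g <= a * b ->
  0 <= (v0 * w0 - g) ^+ 2 - (v0 ^+ 2 - a ^+ 2) * (w0 ^+ 2 - b ^+ 2).
Proof.
move=> v0p w0p a0 b0 hv hw hg.
have va : a < v0 by nra.
have wb : b < w0 by nra.
have ab_le : a * b <= v0 * w0 by nra.
have sq_le : (v0 * w0 - a * b) ^+ 2 <= (v0 * w0 - g) ^+ 2 by nra.
have -> : (v0 * w0 - g) ^+ 2 - (v0 ^+ 2 - a ^+ 2) * (w0 ^+ 2 - b ^+ 2) =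
   ((v0 * w0 - g) ^+ 2 - (v0 * w0 - a * b) ^+ 2) + (v0 * b - a * w0) ^+ 2 by ring.
by rewrite addr_ge0 ?sqr_ge0 // subr_ge0.
Qed.

Lemma segment_avoids_origin {K : realFieldType} {n : nat} {v w : 'rV[K]_n} {l : K} :
  v != 0 -> 0 < l -> ~ (exists c, 0 <= c /\ w = - c *: v) ->
  forall t, 0 <= t <= 1 -> v + t *: (l *: w - v) != 0.
Proof.
move=> hv l0 nw t /andP[t0 t1]; apply/negP => /eqP h0; apply: nw.
have [t00|tn0] := eqVneq t 0.
  by move: hv; rewrite -h0 t00 scale0r addr0 eqxx.
have tl0 : t * l != 0 by rewrite mulf_neq0 // gt_eqF.
exists ((1 - t) / (t * l)); split; first by rewrite divr_ge0 ?subr_ge0 // mulr_ge0 // ltW.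
apply/rowP => j; have := congr1 (fun z : 'rV[K]_n => z 0 j) h0; rewrite !mxE => hj.
have wj : w 0 j = ((t - 1) * v 0 j) / (t * l).
  apply: (mulIf tl0); rewrite divfK //.
  by apply/eqP; rewrite -subr_eq0; apply/eqP; rewrite -hj; ring.
by rewrite wj; field; rewrite gt_eqF.
Qed.

Section FinslerNorm.
Context {R : realType} {n : nat} {F : 'rV[R]_n -> R}.
Hypothesis hF : finsler_norm F.

Local Notation G := (sqF F).
Local Notation e := (ebasis R).

Lemma finsler_ge0 (x : 'rV[R]_n) : 0 <= F x.
Proof. by case: hF. Qed.

Lemma finsler_homog (l : R) x : 0 < l -> F (l *: x) = l * F x.
Proof. by case: hF => _ [_ [_ [H _]]]; exact: H. Qed.

Lemma fund_tensor_pos (x : 'rV[R]_n) : x != 0 -> forall y : 'rV[R]_n, y != 0 ->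
  0 < \sum_(a < n) \sum_(b < n) fund_tensor F x a b * y 0 a * y 0 b.
Proof. by case: hF => _ [_ [_ [_ H]]]; exact: H. Qed.

Lemma iter_partial_continuous l {x : 'rV[R]_n} :
  x != 0 -> {for x, continuous (iter_partial l F)}.
Proof. by case: hF => _ [[_ H] _] hx; apply: (H l).1; rewrite inE. Qed.

Lemma iter_partial_derivable l a {x : 'rV[R]_n} :
  x != 0 -> derivable (iter_partial l F) x (e a).
Proof. by case: hF => _ [[_ H] _] hx; apply: (H l).2. Qed.

Lemma near_nonzero {x : 'rV[R]_n} : x != 0 -> \forall z \near x, z != 0.
Proof. by case: hF => _ [[Uo _] _] hx; exact: Uo. Qed.

Lemma sqF_mul : G = F * F.
Proof. by apply/funext => z; rewrite /sqF expr2. Qed.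

Lemma sqF_derivable {x : 'rV[R]_n} a : x != 0 -> derivable G x (e a).
Proof.
move=> hx; rewrite sqF_mul.
by apply: derivableM; exact: (iter_partial_derivable [::] a hx).
Qed.

Lemma partial_sqF_near {x : 'rV[R]_n} a : x != 0 ->
  \forall z \near x, (cst 2 * F * partial a F) z = partial a G z.
Proof.
move=> hx; apply: filterS (near_nonzero hx) => z hz.
have Fd := iter_partial_derivable [::] a hz.
rewrite /partial sqF_mul deriveM //= !scaleRE !fctE; ring.
Qed.

Lemma partial_sqF_derivable {x : 'rV[R]_n} a b :
  x != 0 -> derivable (partial a G) x (e b).
Proof.
move=> hx; apply: near_eq_derivable (partial_sqF_near a hx) _.
apply: derivableM; last exact: (iter_partial_derivable [:: a] b hx).
by apply: derivableM; [exact: derivable_cst | exact: (iter_partial_derivable [::] b hx)].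
Qed.

Lemma partial_sqF_continuous {x : 'rV[R]_n} a :
  x != 0 -> {for x, continuous (partial a G)}.
Proof.
move=> hx; apply: near_eq_continuous (partial_sqF_near a hx) _.
have nF := nbhs_filter x.
have c2F := @cvgM _ _ _ nF (cst 2) F _ _ (@cvg_cst _ _ _ _ nF)
  (iter_partial_continuous [::] hx).
exact: (@cvgM _ _ _ nF _ _ _ _ c2F (iter_partial_continuous [:: a] hx)).
Qed.

Lemma second_partial_sqF_near {x : 'rV[R]_n} a b : x != 0 -> \forall z \near x,
  (cst 2 * (F * partial b (partial a F) + partial a F * partial b F)) z
  = partial b (partial a G) z.
Proof.
move=> hx; apply: filterS (near_nonzero hx) => z hz.
have Fd := iter_partial_derivable [::] b hz.
have dFd := iter_partial_derivable [:: a] b hz.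
have d2F : derivable (cst 2 * F) z (e b).
  by apply: derivableM => //; exact: derivable_cst.
rewrite /partial -(near_eq_derive _ (partial_sqF_near a hz)).
rewrite (deriveM d2F dFd) (deriveM (derivable_cst (2 : R) z (e b)) Fd) derive_cst.
rewrite !scaleRE !fctE /iter_partial /partial /=; ring.
Qed.

Lemma second_partial_sqF_continuous {x : 'rV[R]_n} a b : x != 0 ->
  {for x, continuous (partial b (partial a G))}.
Proof.
move=> hx; apply: near_eq_continuous (second_partial_sqF_near a b hx) _.
have nF := nbhs_filter x.
have c1 := @cvgM _ _ _ nF _ _ _ _ (iter_partial_continuous [::] hx)
  (iter_partial_continuous [:: b; a] hx).
have c2 := @cvgM _ _ _ nF _ _ _ _ (iter_partial_continuous [:: a] hx)
  (iter_partial_continuous [:: b] hx).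
exact: (@cvgM _ _ _ nF (cst 2) _ _ _ (@cvg_cst _ _ _ _ nF)
  (@cvgD _ _ _ _ nF _ _ _ _ c1 c2)).
Qed.

Lemma derive_sqF {x : 'rV[R]_n} : x != 0 -> forall u,
  derivable G x u /\ 'D_u G x = \sum_(a < n) u 0 a * partial a G x.
Proof.
move=> hx; apply: derive_from_partials.
  by apply: filterS (near_nonzero hx) => z hz a; exact: sqF_derivable.
by move=> a; exact: partial_sqF_continuous.
Qed.

Lemma derive_partial_sqF {x : 'rV[R]_n} a : x != 0 -> forall u,
  derivable (partial a G) x u /\
  'D_u (partial a G) x = \sum_(b < n) u 0 b * partial b (partial a G) x.
Proof.
move=> hx; apply: derive_from_partials.
  by apply: filterS (near_nonzero hx) => z hz b; exact: partial_sqF_derivable.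
by move=> b; exact: second_partial_sqF_continuous.
Qed.

Lemma euler_sqF {x : 'rV[R]_n} : x != 0 -> 'D_x G x = 2 * G x.
Proof.
move=> hx; rewrite /derive; apply: cvg_lim => //.
have quotE : \forall h \near 0^', (h + 2) * G x =
    h^-1 *: ((G \o shift x) (h *: x) - G x).
  near=> h.
  have h0 : h != 0 by near: h; exact: nbhs_dnbhs_neq.
  have h1 : `|h| < 1 by near: h; apply: dnbhs0_lt.
  have hp : 0 < h + 1 by move: h1; rewrite ltr_norml; lra.
  rewrite /= (_ : h *: x + x = (h + 1) *: x); last by rewrite scalerDl scale1r.
  by rewrite /sqF finsler_homog // scaleRE; field.
apply: cvg_trans (near_eq_cvg quotE) _.
have c : {for 0, continuous (fun h : R => (h + 2) * G x)}.
  apply: cvgM; last exact: cvg_cst.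
  by apply: cvgD; [exact: cvg_id | exact: cvg_cst].
by have := (continuous_withinNx _ _).1 c; rewrite add0r.
Unshelve. all: by end_near.
Qed.

Lemma euler_sqF_partials {x : 'rV[R]_n} : x != 0 ->
  \sum_(a < n) x 0 a * partial a G x = 2 * G x.
Proof. by move=> hx; have [_ <-] := derive_sqF hx x; exact: euler_sqF. Qed.

(* Differentiating Euler's identity along e_b:
   sum_a v_a d_b d_a G(v) = d_b G(v). *)
Lemma euler_partial_sqF (v : 'rV[R]_n) (b : 'I_n) : v != 0 ->
  \sum_(a < n) v 0 a * partial b (partial a G) v = partial b G v.
Proof.
move=> hv.
pose coord a := fun y : 'rV[R]_n => y 0 a.
pose H := \sum_(a < n) (coord a * partial a G).
have HE z : H z = \sum_(a < n) z 0 a * partial a G z by rewrite /H fct_sumE.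
have term_der a : is_derive v (e b) (coord a * partial a G)
    (v 0 a * partial b (partial a G) v + partial a G v * e b 0 a).
  have [dpa _] := derive_partial_sqF a hv (e b).
  have := is_deriveM (is_derive_coord v (e b) a) (derivableP dpa).
  by rewrite !scaleRE.
have H_euler : 'D_(e b) H v = 2 * partial b G v.
  rewrite (@near_eq_derive _ _ _ H (2 \*o G) v (e b)); last first.
    by apply: filterS (near_nonzero hv) => z hz; rewrite HE euler_sqF_partials.
  by rewrite deriveMl //; exact: sqF_derivable.
have H_sum : 'D_(e b) H v =
    \sum_(a < n) v 0 a * partial b (partial a G) v + partial b G v.
  rewrite derive_sum; last by move=> a; have [] := term_der a.
  under eq_bigr => a _ do rewrite derive_val.
  rewrite big_split /=; congr (_ + _).
  rewrite (bigD1 b) //= ebasisE eqxx mulr1 big1 ?addr0 // => a ab.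
  by rewrite ebasisE (negbTE ab) mulr0.
by move: H_sum; rewrite H_euler => H2; lra.
Qed.

Lemma gbar_derive (v w : 'rV[R]_n) : v != 0 -> gbar F v w = 2^-1 * 'D_w G v.
Proof.
move=> hv; rewrite /gbar (negbTE hv).
have [_ ->] := derive_sqF hv w.
rewrite exchange_big /= mulr_sumr; apply: eq_bigr => b _.
rewrite -euler_partial_sqF // mulr_sumr mulr_sumr; apply: eq_bigr => a _.
rewrite /fund_tensor; ring.
Qed.

(* Along a line avoiding 0, the slope t |-> 'D_d G (v + t d) has derivative
   2 g_{v+td}(d, d) >= 0. *)
Definition line_slope (v d : 'rV[R]_n) (t : R) : R :=
  \sum_(a < n) d 0 a * partial a G (v + t *: d).

Lemma line_slope_derive {v d : 'rV[R]_n} {t : R} : v + t *: d != 0 ->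
  derivable (line_slope v d) t 1 /\ 0 <= 'D_1 (line_slope v d) t.
Proof.
move=> hp.
pose pa a := fun s : R => partial a G (v + s *: d).
have pa_der a : is_derive t 1 (pa a) ('D_d (partial a G) (v + t *: d)).
  exact: is_derive_line (derive_partial_sqF a hp d).1.
have slopeE : line_slope v d = \sum_(a < n) (d 0 a \*o pa a).
  by apply/funext => s; rewrite fct_sumE.
have term_der a : derivable (d 0 a \*o pa a) t 1.
  by apply: derivableM; [exact: derivable_cst | case: (pa_der a)].
split; first by rewrite slopeE; apply: derivable_sum.
rewrite slopeE derive_sum //.
under eq_bigr => a _.
  rewrite deriveMl; last by case: (pa_der a).
  have [_ ->] := pa_der a.
  have [_ ->] := derive_partial_sqF a hp d.
  over.
have -> : \sum_(a < n) d 0 a *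
      (\sum_(b < n) d 0 b * partial b (partial a G) (v + t *: d)) =
    2 * \sum_(a < n) \sum_(b < n) fund_tensor F (v + t *: d) a b * d 0 a * d 0 b.
  rewrite mulr_sumr; apply: eq_bigr => a _.
  by rewrite !mulr_sumr; apply: eq_bigr => b _; rewrite /fund_tensor; field.
apply: mulr_ge0 => //; have [->|dn0] := eqVneq d 0.
  by rewrite big1 // => a _; rewrite big1 // => b _; rewrite mxE mulr0 mul0r.
exact/ltW/fund_tensor_pos.
Qed.

Lemma sqF_above_tangent {v d : 'rV[R]_n} :
  (forall t : R, 0 <= t <= 1 -> v + t *: d != 0) ->
  G v + 'D_d G v <= G (v + d).
Proof.
move=> hseg.
have hv : v != 0 by have := hseg 0; rewrite scale0r addr0; apply; rewrite lexx ler01.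
pose phi t := G (v + t *: d).
have phi_der (t : R) : 0 <= t <= 1 -> is_derive t 1 phi (line_slope v d t).
  move=> ht; have [Gd GdE] := derive_sqF (hseg t ht) d.
  by rewrite /line_slope -GdE; exact: is_derive_line.
have slope_der (t : R) : 0 <= t <= 1 ->
    derivable (line_slope v d) t 1 /\ 0 <= 'D_1 (line_slope v d) t.
  by move=> ht; exact: line_slope_derive (hseg t ht).
have in01 (s : R) : 0 < s < 1 -> 0 <= s <= 1 by move=> /andP[s0 s1]; rewrite !ltW.
have slope_mono (t : R) : 0 <= t <= 1 -> line_slope v d 0 <= line_slope v d t.
  move=> /andP[t0 t1]; apply: (@ger0_derive1_ndecr R _ 0 1) => //.
  - by move=> s; rewrite in_itv /= => /in01/slope_der[].
  - by move=> s; rewrite in_itv /= derive1E => /in01/slope_der[].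
  - apply: derivable_within_continuous => s; rewrite in_itv /=.
    by move=> /slope_der[].
have [xi + incrE] : exists2 xi, xi \in `[0, 1] &
    phi 1 - phi 0 = line_slope v d xi * (1 - 0).
  apply: MVT_segment ler01 _ _.
    by move=> s; rewrite in_itv /= => /in01/phi_der[].
  apply: derivable_within_continuous => s; rewrite in_itv /= => hs.
  by case: (phi_der s hs).
rewrite in_itv /= => /slope_mono.
have [_ ->] := derive_sqF hv d.
move: incrE; rewrite /phi /line_slope !scale0r !addr0 scale1r subr0 mulr1; lra.
Qed.

Lemma fundamental_inequality (v w : 'rV[R]_n) :
  v != 0 -> 'D_w G v <= 2 * F v * F w.
Proof.
move=> hv.
have lin u : 'D_u G v = \sum_(a < n) u 0 a * partial a G v := (derive_sqF hv u).2.
have euler : 'D_v G v = 2 * F v ^+ 2 := euler_sqF hv.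
have Fv := finsler_ge0 v; have Fw := finsler_ge0 w.
have [[c [c0 wE]]|nw] := pselect (exists c : R, 0 <= c /\ w = - c *: v).
  (* w = - c v: then 'D_w G v = - 2 c F(v)^2 <= 0. *)
  have -> : 'D_w G v = - c * 'D_v G v.
    by rewrite !lin mulr_sumr; apply: eq_bigr => a _; rewrite wE !mxE; ring.
  rewrite euler; nra.
(* Otherwise convexity on the segment from v to l w gives the quadratic bound. *)
apply: quadratic_bound => // l l0.
have := sqF_above_tangent (segment_avoids_origin hv l0 nw).
have Gl : G (l *: w) = l ^+ 2 * F w ^+ 2 by rewrite /sqF finsler_homog // exprMn.
have Dl : 'D_(l *: w - v) G v = l * 'D_w G v - 'D_v G v.
  by rewrite !lin mulr_sumr -sumrB; apply: eq_bigr => a _; rewrite !mxE; ring.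
rewrite (addrC v) subrK Gl Dl euler /sqF; lra.
Qed.

End FinslerNorm.

Theorem mainTheorem11 (R : realType) (n : nat) (hn : (1 <= n)%N)
  (F : 'rV[R]_n -> R) (hF : finsler_norm F)
  (v0 w0 : R) (v w : 'rV[R]_n) (hv0 : 0 < v0) (hw0 : 0 < w0)
  (hv : 0 < v0 ^+ 2 - F v ^+ 2) (hw : 0 < w0 ^+ 2 - F w ^+ 2) :
  0 <= (v0 * w0 - gbar F v w) ^+ 2 - (v0 ^+ 2 - F v ^+ 2) * (w0 ^+ 2 - F w ^+ 2).
Proof.
have Fv := finsler_ge0 hF v; have Fw := finsler_ge0 hF w.
apply: reverse_cauchy_schwarz => //.
have [v00|vn0] := eqVneq v 0.
  by rewrite /gbar v00 eqxx mulr_ge0 // finsler_ge0.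
have := fundamental_inequality hF v w vn0.
rewrite gbar_derive //; lra.
Qed.
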